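(* Let $G_1,G_2$ be ordered graphs, and let $L_1,L_2$ be the lengths of the longest monotone paths in $G_1,G_2$ respectively. Then the length of the longest monotone path in the lexicographic product $G_1\otimes G_2$ is exactly $L_1L_2$.
   Context: An ordered graph is a finite graph with a linear order on its vertex set. A path $v_1,\dots,v_L$ in an ordered graph is monotone if $v_1<v_2<\dots<v_L$ in the order; its length is its number of vertices. The lexicographic product $G_1\otimes G_2$ is the ordered graph on vertex set $V(G_2)\times V(G_1)$, ordered lexicographically with the $G_2$-coordinate compared first, in which $(u,x)$ and $(w,y)$ are adjacent if and only if either $u\neq w$ and $uw\in E(G_2)$, or $u=w$ and $xy\in E(G_1)$. (Equivalently: each vertex of $G_2$ is blown up into an interval of $|G_1|$ vertices, edges of $G_2$ become complete bipartite graphs between blowup sets, and a copy of $G_1$ is placed in each blowup set.) *)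

From mathcomp Require Import all_boot.
Set Implicit Arguments. Unset Strict Implicit. Unset Printing Implicit Defensive.

(* An ordered graph on the vertex set {0, ..., nv - 1}, ordered by the usual
   order of nat.  [adj] is the adjacency relation; only its values on
   vertices (numbers < nv) matter. *)
Record ograph := OGraph { nv : nat; adj : nat -> nat -> bool }.

Definition is_ograph (G : ograph) : Prop :=
  forall x y, x < nv G -> y < nv G ->
    adj G x y = adj G y x /\ ~~ adj G x x.

(* A monotone path v_1 < v_2 < ... < v_L with v_i v_{i+1} edges;
   its length is the number of vertices (size of the sequence). *)
Definition mono_path (G : ograph) (s : seq nat) : bool :=
  all (fun v => v < nv G) s &&
  sorted (fun x y => (x < y) && adj G x y) s.

Definition longest_mono_path (G : ograph) (L : nat) : Prop :=
  (exists2 s, mono_path G s & size s = L) /\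
  (forall s, mono_path G s -> size s <= L).

(* Lexicographic product G1 ⊗ G2: vertex (u, x) with u in V(G2), x in V(G1)
   is encoded as u * nv G1 + x, so the lexicographic order (G2-coordinate
   first) is exactly the order of nat. *)
Definition lexprod (G1 G2 : ograph) : ograph :=
  OGraph (nv G2 * nv G1)
    (fun i j =>
       let u := i %/ nv G1 in let x := i %% nv G1 in
       let w := j %/ nv G1 in let y := j %% nv G1 in
       ((u != w) && adj G2 u w) || ((u == w) && adj G1 x y)).

(* A monotone path of G1 ⊗ G2 is cut by the G2-coordinate into maximal blocks
   of consecutive vertices lying in one blowup interval.  The G2-coordinates of
   the blocks form a monotone path of G2, and each block is a monotone path of
   a copy of G1, so there are at most L2 blocks of at most L1 vertices.
   Conversely, running through a longest monotone path of G1 inside the blowup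
   of each vertex of a longest monotone path of G2 gives L1 L2 vertices. *)

(* Defs comes last so that [mono_path] is its predicate, not path.v's lemma. *)
From mathcomp Require Import all_boot zify.
From Pilot Require Import Defs.

Definition mono_rel (G : ograph) : rel nat := fun x y => (x < y) && adj G x y.

Lemma mono_pathE G s :
  mono_path G s = all (fun v => v < nv G) s && sorted (mono_rel G) s.
Proof. by []. Qed.

Lemma mono_path1 G x : mono_path G [:: x] = (x < nv G).
Proof. by rewrite mono_pathE /= !andbT. Qed.

Lemma mono_path_vertex G s x : mono_path G s -> x \in s -> x < nv G.
Proof. by case/andP=> /allP/(_ x). Qed.

Lemma mono_path_cons G x y s :
  mono_path G [:: x, y & s] = [&& x < nv G, mono_rel G x y & mono_path G (y :: s)].
Proof.
rewrite !mono_pathE /=.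
by case: (x < nv G) (y < nv G) (all _ s) => [] [] [] /=; rewrite ?andbF.
Qed.

Lemma mono_path_cat G x s y t :
  mono_path G (x :: s ++ y :: t) =
  [&& mono_path G (x :: s), mono_rel G (last x s) y & mono_path G (y :: t)].
Proof.
rewrite !mono_pathE -cat_cons all_cat /= cat_path /=.
by case: (x < nv G) (all _ s) (y < nv G) (all _ t) => [] [] [] [] //=; rewrite !andbF.
Qed.

(* Also for [n = 0], where [x %/ 0 = 0] and [x %% 0 = x]. *)
Lemma ltn_divmod n x y :
  (x < y) = (x %/ n < y %/ n) || (x %/ n == y %/ n) && (x %% n < y %% n).
Proof.
rewrite {1}(divn_eq x n) {1}(divn_eq y n).
case: (posnP n) => [->|n_gt0]; first by rewrite !divn0 !modn0 !muln0.
have := ltn_pmod x n_gt0; have := ltn_pmod y n_gt0; nia.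
Qed.

Lemma lexprod_vertex G1 G2 x :
  (x < nv (lexprod G1 G2)) = (x %/ nv G1 < nv G2) && (x %% nv G1 < nv G1).
Proof.
case: (posnP (nv G1)) => [n_eq0|n_gt0] /=.
  by rewrite n_eq0 muln0 modn0 ltn0 andbF.
by rewrite ltn_divLR // ltn_mod n_gt0 andbT.
Qed.

Lemma lexprod_rel G1 G2 x y :
  mono_rel (lexprod G1 G2) x y =
  mono_rel G2 (x %/ nv G1) (y %/ nv G1) ||
  (x %/ nv G1 == y %/ nv G1) && mono_rel G1 (x %% nv G1) (y %% nv G1).
Proof.
by rewrite /mono_rel /= (ltn_divmod (nv G1)); case: ltngtP.
Qed.

Lemma divnMDl_lt n u a : a < n -> (u * n + a) %/ n = u.
Proof. by move=> lt_an; rewrite divnMDl ?divn_small ?addn0 //; apply: leq_ltn_trans lt_an. Qed.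

Lemma modnMDl_lt n u a : a < n -> (u * n + a) %% n = a.
Proof. by move=> lt_an; rewrite modnMDl modn_small. Qed.

Lemma lexprod_vertex_pair G1 G2 u a :
  a < nv G1 -> (u * nv G1 + a < nv (lexprod G1 G2)) = (u < nv G2).
Proof. by move=> lt_a; rewrite lexprod_vertex divnMDl_lt ?modnMDl_lt ?lt_a ?andbT. Qed.

Lemma lexprod_rel_pair G1 G2 u a w b : a < nv G1 -> b < nv G1 ->
  mono_rel (lexprod G1 G2) (u * nv G1 + a) (w * nv G1 + b) =
  mono_rel G2 u w || (u == w) && mono_rel G1 a b.
Proof. by move=> lt_a lt_b; rewrite lexprod_rel !divnMDl_lt ?modnMDl_lt. Qed.

Lemma mono_path_lexprod_block G1 G2 u q : u < nv G2 -> mono_path G1 q ->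
  mono_path (lexprod G1 G2) [seq u * nv G1 + a | a <- q].
Proof.
rewrite !mono_pathE all_map sorted_map => lt_u /andP[q_vert q_sorted].
apply/andP; split.
  by apply: sub_all q_vert => a lt_a /=; rewrite lexprod_vertex_pair.
apply: (sub_in_sorted _ q_vert q_sorted) => a b lt_a lt_b ab /=.
by rewrite lexprod_rel_pair // ab eqxx orbT.
Qed.

Lemma mono_path_lexprod_allpairs G1 G2 p q : mono_path G2 p -> mono_path G1 q ->
  mono_path (lexprod G1 G2) [seq u * nv G1 + a | u <- p, a <- q].
Proof.
case: q => [|a q] + mono_q; first by rewrite allpairs0r.
elim: p => [|u [|w p] IHp] //.
  by rewrite mono_path1 allpairs_cons cats0 => lt_u; apply: mono_path_lexprod_block.
rewrite mono_path_cons => /and3P[lt_u uw mono_wp].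
have [lt_a lt_last] : a < nv G1 /\ last a q < nv G1.
  by split; apply: mono_path_vertex mono_q _; rewrite ?mem_head ?mem_last.
rewrite allpairs_cons [X in mono_path _ X]/= mono_path_cat last_map.
rewrite lexprod_rel_pair // uw; apply/and3P; split=> //; last exact: IHp.
exact: mono_path_lexprod_block lt_u mono_q.
Qed.

Section LexprodUpperBound.

Variables (G1 G2 : ograph) (L1 : nat).
Hypothesis L1_max : forall s, mono_path G1 s -> size s <= L1.

(* [t] lists the blocks after the one of [x], [r] the rest of that block. *)
Lemma lexprod_path_blocks x s : mono_path (lexprod G1 G2) (x :: s) ->
  exists t r, [/\ mono_path G2 (x %/ nv G1 :: t), mono_path G1 (x %% nv G1 :: r)
                & size s <= L1 * size t + size r].
Proof.
elim: s x => [|y s IHs] x.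
  rewrite mono_path1 lexprod_vertex => /andP[lt_u lt_a].
  by exists [::], [::]; rewrite !mono_path1 lt_u lt_a.
rewrite mono_path_cons lexprod_rel lexprod_vertex => /and3P[/andP[lt_u lt_a] xy mono_ys].
have [t [r [mono_t mono_r size_s]]] := IHs y mono_ys.
case/orP: xy => [new_block | /andP[/eqP same_block xy]].
  exists (y %/ nv G1 :: t), [::]; split; rewrite ?mono_path1 ?mono_path_cons //=.
    by rewrite lt_u new_block.
  by have := L1_max _ mono_r; rewrite /=; lia.
exists t, (y %% nv G1 :: r); split; rewrite ?mono_path_cons ?same_block ?lt_a ?xy //=.
by rewrite addnS ltnS.
Qed.

Lemma lexprod_mono_path_size_le L2 s :
  (forall t, mono_path G2 t -> size t <= L2) ->
  mono_path (lexprod G1 G2) s -> size s <= L1 * L2.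
Proof.
move=> L2_max; case: s => [|x s] // /lexprod_path_blocks[t [r [mono_t mono_r size_s]]].
by have := L1_max _ mono_r; have := L2_max _ mono_t; rewrite /=; nia.
Qed.

End LexprodUpperBound.

Theorem proposition3p2 (G1 G2 : ograph) (L1 L2 : nat) :
  is_ograph G1 -> is_ograph G2 ->
  longest_mono_path G1 L1 -> longest_mono_path G2 L2 ->
  longest_mono_path (lexprod G1 G2) (L1 * L2).
Proof.
move=> _ _ [[q mono_q <-] L1_max] [[p mono_p <-] L2_max]; split.
  exists [seq u * nv G1 + a | u <- p, a <- q].
    exact: mono_path_lexprod_allpairs.
  by rewrite size_allpairs mulnC.
by move=> s; apply: lexprod_mono_path_size_le.
Qed.
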